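(* Let $(A,* )$ be an involutive associative algebra, $(M,* )$ an involutive $A$-bimodule, $T:M\to A$ a relative Rota-Baxter operator on $A$ with respect to $M$, and $T_t=\sum_{i=0}^Nt^iT_i$ an order $N$ deformation of $T$. Then $T_t$ extends to a deformation of order $N+1$ (i.e. there is $T_{N+1}\in i\mathrm{Hom}(M,A)$ such that $T_t+t^{N+1}T_{N+1}$ is an order $N+1$ deformation) if and only if the class $[\mathrm{Ob}_{T_t}]\in iH^2_T(M,A)$ is trivial, where $\mathrm{Ob}_{T_t}(u,v)=\sum_{i+j=N+1,\,i,j\ge1}\big(T_i(u)T_j(v)-T_i(T_j(u)v+uT_j(v))\big)$.
   Context: An involutive associative algebra is an associative algebra $A$ with a linear map $*:A\to A$ satisfying $a^{**}=a$ and $(ab)^*=b^*a^*$; an involutive $A$-bimodule is an $A$-bimodule $M$ with $*:M\to M$, $u^{**}=u$, $(au)^*=u^*a^*$, $(ua)^*=a^*u^*$. A relative Rota-Baxter operator is a linear $T:M\to A$ with $T(u^* )=T(u)^*$ and $T(u)T(v)=T(uT(v)+T(u)v)$. Notation: $u\circledast v=uT(v)+T(u)v$, $l_T(u,a)=T(u)a-T(ua)$, $r_T(a,u)=aT(u)-T(au)$. Let $i\mathrm{Hom}(M^{\otimes0},A)=\{a\in A\mid a^*=-a\}$ and for $n\ge1$ $i\mathrm{Hom}(M^{\otimes n},A)=\{f\mid f(u_1,\ldots,u_n)^*=(-1)^{\frac{(n-1)(n-2)}{2}}f(u_n^*,\ldots,u_1^* )\}$. Differential: $d_T(a)(u)=l_T(u,a)-r_T(a,u)$,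 and for $n\ge1$, $(d_Tf)(u_1,\ldots,u_{n+1})=(-1)^n\big[l_T(u_1,f(u_2,\ldots,u_{n+1}))+\sum_{i=1}^n(-1)^if(u_1,\ldots,u_i\circledast u_{i+1},\ldots,u_{n+1})+(-1)^{n+1}r_T(f(u_1,\ldots,u_n),u_{n+1})\big]$; $iH^\bullet_T(M,A)$ is the cohomology of $(i\mathrm{Hom}(M^{\otimes\bullet},A),d_T)$. An order $N$ deformation of $T$ is $T_t=\sum_{i=0}^Nt^iT_i$ with $T_0=T$, $T_i\in \mathrm{Hom}(M,A)$, such that $T_k(u^* )=T_k(u)^*$ and $\sum_{i+j=k}T_i(u)T_j(v)=\sum_{i+j=k}T_i(uT_j(v)+T_j(u)v)$ for all $u,v\in M$ and $k=0,\ldots,N$ (equivalently, $T_t$ is a relative Rota-Baxter operator on $A[[t]]/(t^{N+1})$ w.r.t. $M[[t]]/(t^{N+1})$). It is known that $\mathrm{Ob}_{T_t}\in i\mathrm{Hom}(M^{\otimes2},A)$ is a $2$-cocycle for $d_T$. *)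

From mathcomp Require Import all_boot all_order all_algebra.
Set Implicit Arguments. Unset Strict Implicit. Unset Printing Implicit Defensive.
Import GRing.Theory.
Local Open Scope ring_scope.

Definition is_linear (K : fieldType) (U V : lmodType K) (f : U -> V) : Prop :=
  forall (a : K) (u v : U), f (a *: u + v) = a *: f u + f v.

Definition is_bilinear (K : fieldType) (U V W : lmodType K) (f : U -> V -> W) : Prop :=
  (forall v, is_linear (fun u => f u v)) /\ (forall u, is_linear (f u)).

Record invAlg (K : fieldType) (A : lmodType K) := InvAlg {
  mulA : A -> A -> A;
  starA : A -> A;
  mulA_bilin : is_bilinear mulA;
  mulA_assoc : forall a b c, mulA (mulA a b) c = mulA a (mulA b c);
  starA_lin : is_linear starA;
  starA_invol : forall a, starA (starA a) = a;
  starA_mul : forall a b, starA (mulA a b) = mulA (starA b) (starA a)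
}.

Record invBimod (K : fieldType) (A M : lmodType K) (alg : invAlg A) := InvBimod {
  actl : A -> M -> M;
  actr : M -> A -> M;
  starM : M -> M;
  actl_bilin : is_bilinear actl;
  actr_bilin : is_bilinear actr;
  actl_assoc : forall a b u, actl (mulA alg a b) u = actl a (actl b u);
  actr_assoc : forall u a b, actr u (mulA alg a b) = actr (actr u a) b;
  act_comm : forall a u b, actr (actl a u) b = actl a (actr u b);
  starM_lin : is_linear starM;
  starM_invol : forall u, starM (starM u) = u;
  starM_actl : forall a u, starM (actl a u) = actr (starM u) (starA alg a);
  starM_actr : forall u a, starM (actr u a) = actl (starA alg a) (starM u)
}.

Section Ops.
Variables (K : fieldType) (A M : lmodType K) (alg : invAlg A) (bm : invBimod M alg).
Local Notation "a ** b" := (mulA alg a b) (at level 40, left associativity).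
Local Notation "a *> u" := (actl bm a u) (at level 40).
Local Notation "u <* a" := (actr bm u a) (at level 40).

Definition star_compat (T : M -> A) : Prop :=
  forall u, T (starM bm u) = starA alg (T u).

Definition relRB (T : M -> A) : Prop :=
  is_linear T /\ star_compat T /\
  forall u v, T u ** T v = T (u <* T v + T u *> v).

Definition circ (T : M -> A) (u v : M) : M := u <* T v + T u *> v.
Definition lT (T : M -> A) (u : M) (a : A) : A := T u ** a - T (u <* a).
Definition rT (T : M -> A) (a : A) (u : M) : A := a ** T u - T (a *> u).

(* iHom(M,A) : linear f with f(u)^* = f(u^* ) (sign (-1)^0 = 1) *)
Definition iHom1 (f : M -> A) : Prop := is_linear f /\
  forall u, starA alg (f u) = f (starM bm u).

(* iHom(M^{(x)2},A) : bilinear f with f(u,v)^* = f(v^*,u^* ) (sign (-1)^0 = 1) *)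
Definition iHom2 (f : M -> M -> A) : Prop := is_bilinear f /\
  forall u v, starA alg (f u v) = f (starM bm v) (starM bm u).

(* d_T on 1-cochains: (d_T f)(u1,u2) = (-1)^1 [ l_T(u1, f u2) - f(u1 circledast u2) + r_T(f u1, u2) ] *)
Definition dT1 (T : M -> A) (f : M -> A) (u1 u2 : M) : A :=
  - (lT T u1 (f u2) - f (circ T u1 u2) + rT T (f u1) u2).

Definition is_deformation (T : M -> A) (N : nat) (Ts : nat -> M -> A) : Prop :=
  Ts 0%N = T /\
  (forall k, (k <= N)%N -> is_linear (Ts k) /\ star_compat (Ts k)) /\
  (forall k, (k <= N)%N -> forall u v,
     \sum_(i < k.+1) (Ts i u ** Ts (k - i)%N v)
     = \sum_(i < k.+1) Ts i (u <* Ts (k - i)%N v + Ts (k - i)%N u *> v)).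

Definition Ob (N : nat) (Ts : nat -> M -> A) (u v : M) : A :=
  \sum_(1 <= i < N.+1)
     (Ts i u ** Ts (N.+1 - i)%N v
      - Ts i (Ts (N.+1 - i)%N u *> v + u <* Ts (N.+1 - i)%N v)).

Definition trivial_class2 (T : M -> A) (c : M -> M -> A) : Prop :=
  exists f : M -> A, iHom1 f /\ forall u v, c u v = dT1 T f u v.

Definition extendable (T : M -> A) (N : nat) (Ts : nat -> M -> A) : Prop :=
  exists TN1 : M -> A, iHom1 TN1 /\
    is_deformation T N.+1 (fun i => if i == N.+1 then TN1 else Ts i).

End Ops.

From Pilot Require Import Defs.
From mathcomp Require Import all_boot all_order all_algebra.
Set Implicit Arguments. Unset Strict Implicit. Unset Printing Implicit Defensive.
Import GRing.Theory.
Local Open Scope ring_scope.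

(* At order N+1 the Rota-Baxter identity for T_t + t^(N+1) T_(N+1) consists of
   the terms of Ob_{T_t}, which only involve T_1, ..., T_N, and of the two
   terms pairing T_0 = T with T_(N+1), which add up to -d_T T_(N+1).  Hence
   T_(N+1) extends the deformation iff d_T T_(N+1) = Ob_{T_t}, and T_(N+1)
   ranges over exactly the 1-cochains of iHom(M, A). *)

Lemma is_linear_add (K : fieldType) (U V : lmodType K) (f : U -> V) :
  is_linear f -> forall u v, f (u + v) = f u + f v.
Proof. by move=> linf u v; have := linf 1 u v; rewrite !scale1r. Qed.

Lemma eq_sum_iff_sumB0 (V : zmodType) n (F G : 'I_n -> V) :
  \sum_(i < n) F i = \sum_(i < n) G i <-> \sum_(i < n) (F i - G i) = 0.
Proof. by rewrite sumrB; split=> [-> | /eqP]; [rewrite subrr | rewrite subr_eq0 => /eqP]. Qed.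

Section Extension.
Variables (K : fieldType) (A M : lmodType K) (alg : invAlg A) (bm : invBimod M alg).
Local Notation "a ** b" := (Defs.mulA alg a b) (at level 40, left associativity).
Local Notation "a *> u" := (actl bm a u) (at level 40).
Local Notation "u <* a" := (actr bm u a) (at level 40).

Definition rb_defect (S S' : M -> A) (u v : M) : A :=
  S u ** S' v - S (u <* S' v + S' u *> v).

Definition extend_deformation (N : nat) (Ts : nat -> M -> A) (f : M -> A)
  : nat -> M -> A := fun i => if i == N.+1 then f else Ts i.

Lemma extend_deformation_le N Ts f k :
  (k <= N)%N -> extend_deformation N Ts f k = Ts k.
Proof. by move=> kN; rewrite /extend_deformation ltn_eqF. Qed.

Lemma rb_defect_cross (T f : M -> A) u v :
  is_linear T -> rb_defect T f u v + rb_defect f T u v = - dT1 bm T f u v.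
Proof.
move=> linT; rewrite /rb_defect /dT1 /lT /rT /circ opprK (is_linear_add linT).
by rewrite opprD !addrA [LHS]addrAC [X in X + _ = _]addrAC [LHS]addrAC.
Qed.

Lemma Ob_rb_defect N Ts u v :
  Ob bm N Ts u v = \sum_(1 <= i < N.+1) rb_defect (Ts i) (Ts (N.+1 - i)%N) u v.
Proof. by apply: eq_bigr => i _; rewrite /rb_defect [_ *> v + _]addrC. Qed.

Lemma sum_rb_defect_extend_deformation (T f : M -> A) N Ts u v :
  is_linear T -> Ts 0%N = T ->
  \sum_(i < N.+2) rb_defect (extend_deformation N Ts f i)
                            (extend_deformation N Ts f (N.+1 - i)%N) u v
  = Ob bm N Ts u v - dT1 bm T f u v.
Proof.
move=> linT Ts0; set G := extend_deformation N Ts f.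
rewrite -(big_mkord xpredT (fun i => rb_defect (G i) (G (N.+1 - i)%N) u v)).
rewrite big_nat_recr //= big_ltn //= subn0 subnn.
have -> : G 0%N = T by rewrite /G extend_deformation_le.
have -> : G N.+1 = f by rewrite /G /extend_deformation eqxx.
rewrite addrAC -rb_defect_cross // addrC Ob_rb_defect; congr (_ + _).
apply: eq_big_nat => i /andP[i_gt0 i_leN].
by rewrite /G !extend_deformation_le // leq_subLR addnC -addn1 leq_add2l.
Qed.

Lemma is_deformation_extend (T f : M -> A) N Ts :
  is_linear T -> is_deformation bm T N Ts -> iHom1 bm f ->
  is_deformation bm T N.+1 (extend_deformation N Ts f)
  <-> forall u v, Ob bm N Ts u v = dT1 bm T f u v.
Proof.
move=> linT [Ts0 [Ts_lin Ts_rb]] [linf f_star].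
have top u v := @sum_rb_defect_extend_deformation T f N Ts u v linT Ts0.
split.
- move=> [_ [_ G_rb]] u v; apply/eqP; rewrite -subr_eq0 -top.
  by apply/eqP/eq_sum_iff_sumB0/G_rb.
- move=> Ob_dT1; split; first exact: Ts0.
  split=> k; rewrite leq_eqVlt => /orP[/eqP -> | /[!ltnS] kN].
  + by rewrite /extend_deformation eqxx; split=> // w; rewrite f_star.
  + by rewrite extend_deformation_le //; apply: Ts_lin.
  + by move=> u v; apply/eq_sum_iff_sumB0; rewrite top Ob_dT1 subrr.
  + have ext_Ts j : (j <= k)%N -> extend_deformation N Ts f j = Ts j.
      by move=> jk; rewrite extend_deformation_le // (leq_trans jk kN).
    move=> u v.
    under eq_bigr => i _ do rewrite !ext_Ts ?leq_ord ?leq_subr //.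
    under [RHS]eq_bigr => i _ do rewrite !ext_Ts ?leq_ord ?leq_subr //.
    exact: Ts_rb.
Qed.

End Extension.

Theorem mainTheorem7 (K : fieldType) (A M : lmodType K) (alg : invAlg A)
  (bm : invBimod M alg) (T : M -> A) (N : nat) (Ts : nat -> M -> A) :
  relRB bm T ->
  is_deformation bm T N Ts ->
  extendable bm T N Ts <-> trivial_class2 bm T (Ob bm N Ts).
Proof.
move=> [linT _] Ts_def; split.
- move=> [f [f_iHom f_def]]; exists f; split=> //.
  exact/(is_deformation_extend linT Ts_def f_iHom).
- move=> [f [f_iHom Ob_dT1]]; exists f; split=> //.
  exact/(is_deformation_extend linT Ts_def f_iHom).
Qed.
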